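(* Fix constants $Q>0$, $T_1>0$, $T_2>0$, $0<\mu_i<\mu_o$, $0<R_1(0)<R_2(0)$, a positive integer $n$ and a time $\tau\ge0$. Put $R_0^2(\tau)=Q\tau/\pi$, $R_1^2(\tau)=Q\tau/\pi+R_1^2(0)$, $R_2^2(\tau)=Q\tau/\pi+R_2^2(0)$, $\zeta_1=R_1^2(0)/R_2^2(0)$. Let $\mu\in C^1([\zeta_1,1])$ satisfy $\mu_i<\mu(\zeta)<\mu_o$ on $[\zeta_1,1]$, and define $$F_1=\frac{Qn}{2\pi R_1^2(\tau)}\big(\mu(\zeta_1)-\mu_i\big)-T_1\frac{n^3-n}{R_1^3(\tau)},\qquad F_2=\frac{Qn}{2\pi R_2^2(\tau)}\big(\mu_o-\mu(1)\big)-T_2\frac{n^3-n}{R_2^3(\tau)}.$$ Suppose $\sigma\neq0$ and a nontrivial $f$ satisfy $$\Big(\big(\zeta R_2^2(0)+R_0^2(\tau)\big)\mu f'\Big)'-\frac{n^2R_2^4(0)}{4(\zeta R_2^2(0)+R_0^2(\tau))}\mu f=-\frac{Qn^2R_2^2(0)}{4\pi(\zeta R_2^2(0)+R_0^2(\tau))}\frac{1}{\sigma}\mu'f,\quad \zeta_1<\zeta<1,$$ $$\frac{2R_1^2(\tau)}{nR_2^2(0)}\mu(\zeta_1)f'(\zeta_1)=\Big(\mu_i-\frac{F_1}{\sigma}\Big)f(\zeta_1),\qquad -\frac{2R_2^2(\tau)}{nR_2^2(0)}\mu(1)f'(1)=\Big(\mu_o-\frac{F_2}{\sigma}\Big)f(1).$$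 Then $\sigma$ is real. Moreover, if $\sigma>0$, then $$\sigma<\max\left\{\frac{Qn}{2\pi R_1^2(\tau)}\frac{\mu(\zeta_1)-\mu_i}{\mu_i}-\frac{T_1}{\mu_i}\frac{n^3-n}{R_1^3(\tau)},\ \frac{Qn}{2\pi R_2^2(\tau)}\frac{\mu_o-\mu(1)}{\mu_o}-\frac{T_2}{\mu_o}\frac{n^3-n}{R_2^3(\tau)},\ \frac{Q}{\pi R_2^2(0)}\frac{1}{\mu_i}\sup_{\zeta\in(\zeta_1,1)}\mu'(\zeta)\right\},$$ and consequently, independently of $n$, $$\sigma<\max\left\{\frac{2T_1}{\mu_iR_1^3(\tau)}\Big(\frac{QR_1(\tau)}{6\pi T_1}(\mu(\zeta_1)-\mu_i)+\frac13\Big)^{3/2},\ \frac{2T_2}{\mu_oR_2^3(\tau)}\Big(\frac{QR_2(\tau)}{6\pi T_2}(\mu_o-\mu(1))+\frac13\Big)^{3/2},\ \frac{Q}{\pi R_2^2(0)}\frac{1}{\mu_i}\sup_{\zeta\in(\zeta_1,1)}\mu'(\zeta)\right\}.$$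
   Context: This is the eigenvalue problem for the growth rate $\sigma$ of a disturbance with angular wave number $n$ in the linear stability analysis (under a quasi-steady-state approximation) of three-layer radial Hele-Shaw flow, written in the transformed coordinate $\zeta=(r^2-R_0^2(\tau))/R_2^2(0)$ in which the interfaces are at $\zeta=\zeta_1$ and $\zeta=1$; $\mu_i,\mu_o$ are the constant inner/outer viscosities, $\mu(\zeta)$ the middle-layer viscous profile, $T_1,T_2$ the interfacial tensions and $Q$ the injection rate. *)

From Stdlib Require Import Reals.
From Coquelicot Require Import Coquelicot.
Open Scope R_scope.

Definition is_derive_C (f : R -> C) (x : R) (l : C) : Prop :=
  @is_derive R_AbsRing C_R_NormedModule f x l.

Definition R0sq (Q tau : R) : R := Q * tau / PI.
Definition Rt (Q Rj0 tau : R) : R := sqrt (Q * tau / PI + Rj0 ^ 2).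

(* sup_{zeta in (a,b)} g(zeta) (as a real number; finite when g is bounded) *)
Definition sup_open (g : R -> R) (a b : R) : R :=
  real (Lub_Rbar (fun y => exists z, a < z < b /\ y = g z)).

Definition F1 (Q T1 mui R1 : R) (mu : R -> R) (zeta1 : R) (n : nat) : R :=
  Q * INR n / (2 * PI * R1 ^ 2) * (mu zeta1 - mui)
  - T1 * (INR n ^ 3 - INR n) / R1 ^ 3.

Definition F2 (Q T2 muo R2 : R) (mu : R -> R) (n : nat) : R :=
  Q * INR n / (2 * PI * R2 ^ 2) * (muo - mu 1)
  - T2 * (INR n ^ 3 - INR n) / R2 ^ 3.

From Stdlib Require Import Reals Lra.
From Coquelicot Require Import Coquelicot.
Open Scope R_scope.

(* Multiply the eigenvalue equation, written as (p f')' = (q - w / sigma) f, by the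
   conjugate of f and integrate by parts.  With the Robin conditions at both interfaces this
   gives K = L / sigma, where
     K = k mu_i |f(zeta1)|^2 + k mu_o |f(1)|^2 + int p |f'|^2 + int q |f|^2 > 0  and
     L = k F1 |f(zeta1)|^2 + k F2 |f(1)|^2 + int w |f|^2
   are real, so sigma = L / K is real.  If sigma > 0 and M is the maximum of the three rates,
   then every term of L is at most M times the matching term of
     X = k mu_i |f(zeta1)|^2 + k mu_o |f(1)|^2 + int mu_i (q / mu) |f|^2,
   and X < K because mu > mu_i; hence sigma K = L <= M X < M K.  The bound independent of n
   follows from 3 y n - n^3 <= 2 y^(3/2) for n >= 0. *)

Lemma is_derive_C_Re (f : R -> C) x l :
  is_derive_C f x l -> is_derive (fun y => Re (f y)) x (Re l).
Proof.
  intros H.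
  apply (filterdiff_comp' f (fun t : C_R_NormedModule => (fst t : R_NormedModule)) x _
           (fun t : C_R_NormedModule => (fst t : R_NormedModule))) in H; [exact H|].
  apply filterdiff_linear, (@is_linear_fst R_AbsRing R_NormedModule R_NormedModule).
Qed.

Lemma is_derive_C_Im (f : R -> C) x l :
  is_derive_C f x l -> is_derive (fun y => Im (f y)) x (Im l).
Proof.
  intros H.
  apply (filterdiff_comp' f (fun t : C_R_NormedModule => (snd t : R_NormedModule)) x _
           (fun t : C_R_NormedModule => (snd t : R_NormedModule))) in H; [exact H|].
  apply filterdiff_linear, (@is_linear_snd R_AbsRing R_NormedModule R_NormedModule).
Qed.

Lemma is_derive_C_of_parts (f : R -> C) x l :
  is_derive (fun y => Re (f y)) x (Re l) -> is_derive (fun y => Im (f y)) x (Im l) ->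
  is_derive_C f x l.
Proof.
  intros Hre Him.
  pose proof (@filterdiff_comp'_2 R_AbsRing R_NormedModule R_NormedModule R_NormedModule
     C_R_NormedModule _ _ (fun a b => (a, b)) x _ _ (fun a b => (a, b)) Hre Him) as H.
  eapply filterdiff_ext_lin; [eapply filterdiff_ext; [|apply H]|].
  - intros y; cbv beta; destruct (f y); reflexivity.
  - eapply filterdiff_ext_lin; [eapply filterdiff_ext; [|apply filterdiff_id]|];
      intros [u v]; reflexivity.
  - intros y; destruct l; reflexivity.
Qed.

Lemma is_derive_C_unique (f : R -> C) x l1 l2 :
  is_derive_C f x l1 -> is_derive_C f x l2 -> l1 = l2.
Proof.
  intros H1 H2.
  apply injective_projections.
  - change (Re l1 = Re l2).
    apply is_derive_C_Re in H1, H2.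
    rewrite <- (is_derive_unique _ _ _ H1). exact (is_derive_unique _ _ _ H2).
  - change (Im l1 = Im l2).
    apply is_derive_C_Im in H1, H2.
    rewrite <- (is_derive_unique _ _ _ H1). exact (is_derive_unique _ _ _ H2).
Qed.

(* Coquelicot's [is_derive_ext] and [continuous_ext] state the pointwise equation in a
   structure carrier, where [ring] does not apply; these versions state it in [R]. *)
Lemma is_derive_Rext (f g : R -> R) x l :
  (forall y, f y = g y) -> is_derive f x l -> is_derive g x l.
Proof. apply is_derive_ext. Qed.

Lemma continuous_Rext (f g : R -> R) x :
  (forall y, f y = g y) -> continuous f x -> continuous g x.
Proof. apply continuous_ext. Qed.

Lemma is_derive_Rmult (f g : R -> R) x df dg :
  is_derive f x df -> is_derive g x dg -> is_derive (fun y => f y * g y) x (df * g x + f x * dg).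
Proof. intros Hf Hg. apply (is_derive_mult f g); auto. intros; apply Rmult_comm. Qed.

Lemma is_derive_C_RtoC_mult (p : R -> R) (g : R -> C) x dp dg :
  is_derive p x dp -> is_derive_C g x dg ->
  is_derive_C (fun y => RtoC (p y) * g y)%C x (RtoC dp * g x + RtoC (p x) * dg)%C.
Proof.
  intros Hp Hg.
  apply is_derive_C_of_parts.
  - apply (is_derive_Rext (fun y => p y * Re (g y))); [intros y; unfold Re, Im; simpl; ring|].
    replace (Re _) with (dp * Re (g x) + p x * Re dg) by (unfold Re, Im; simpl; ring).
    exact (is_derive_Rmult _ _ _ _ _ Hp (is_derive_C_Re _ _ _ Hg)).
  - apply (is_derive_Rext (fun y => p y * Im (g y))); [intros y; unfold Re, Im; simpl; ring|].
    replace (Im _) with (dp * Im (g x) + p x * Im dg) by (unfold Re, Im; simpl; ring).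
    exact (is_derive_Rmult _ _ _ _ _ Hp (is_derive_C_Im _ _ _ Hg)).
Qed.

Lemma is_derive_C_mult_conj (g h : R -> C) x dg dh :
  is_derive_C g x dg -> is_derive_C h x dh ->
  is_derive_C (fun y => g y * Cconj (h y))%C x (dg * Cconj (h x) + g x * Cconj dh)%C.
Proof.
  intros Hg Hh.
  pose proof (is_derive_C_Re _ _ _ Hg) as Hgr. pose proof (is_derive_C_Im _ _ _ Hg) as Hgi.
  pose proof (is_derive_C_Re _ _ _ Hh) as Hhr. pose proof (is_derive_C_Im _ _ _ Hh) as Hhi.
  apply is_derive_C_of_parts.
  - apply (is_derive_Rext (fun y => Re (g y) * Re (h y) + Im (g y) * Im (h y)));
      [intros y; unfold Re, Im; simpl; ring|].
    replace (Re _) with ((Re dg * Re (h x) + Re (g x) * Re dh)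
                         + (Im dg * Im (h x) + Im (g x) * Im dh)) by (unfold Re, Im; simpl; ring).
    apply (is_derive_plus (fun y => _ * _) (fun y => _ * _)); apply is_derive_Rmult; assumption.
  - apply (is_derive_Rext (fun y => Im (g y) * Re (h y) - Re (g y) * Im (h y)));
      [intros y; unfold Re, Im; simpl; ring|].
    replace (Im _) with ((Im dg * Re (h x) + Im (g x) * Re dh)
                         - (Re dg * Im (h x) + Re (g x) * Im dh)) by (unfold Re, Im; simpl; ring).
    apply (is_derive_minus (fun y => _ * _) (fun y => _ * _)); apply is_derive_Rmult; assumption.
Qed.

Lemma continuous_Re_comp (g : R -> C) x : continuous g x -> continuous (fun y => Re (g y)) x.
Proof.
  intros Hg. apply (continuous_comp g fst); [exact Hg|].
  destruct (g x); apply continuous_fst.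
Qed.

Lemma continuous_Im_comp (g : R -> C) x : continuous g x -> continuous (fun y => Im (g y)) x.
Proof.
  intros Hg. apply (continuous_comp g snd); [exact Hg|].
  destruct (g x); apply continuous_snd.
Qed.

Lemma continuous_Cmod_sqr_comp (g : R -> C) x :
  continuous g x -> continuous (fun y => Cmod (g y) ^ 2) x.
Proof.
  intros Hg.
  apply (continuous_Rext (fun y => Re (g y) * Re (g y) + Im (g y) * Im (g y)));
    [intros y; rewrite Cmod2_alt; ring|].
  apply (continuous_plus (fun y => Re (g y) * Re (g y)) (fun y => Im (g y) * Im (g y))).
  - apply (continuous_mult (fun y => Re (g y)) (fun y => Re (g y)));
      apply continuous_Re_comp, Hg.
  - apply (continuous_mult (fun y => Im (g y)) (fun y => Im (g y)));
      apply continuous_Im_comp, Hg.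
Qed.

Lemma is_derive_C_continuous (g : R -> C) x l : is_derive_C g x l -> continuous g x.
Proof. intros H. apply (ex_derive_continuous (V := C_R_NormedModule)). exists l. exact H. Qed.

(* Quotients leave the side goal that the denominator does not vanish. *)
Ltac solve_continuous :=
  repeat match goal with
  | |- continuous (fun _ => ?c) _ => apply continuous_const
  | |- continuous (fun y => @?u y + @?v y) _ => apply (continuous_plus u v)
  | |- continuous (fun y => @?u y - @?v y) _ => apply (continuous_minus u v)
  | |- continuous (fun y => @?u y * @?v y) _ => apply (continuous_mult u v)
  | |- continuous (fun y => @?u y / @?v y) _ => apply (continuous_mult u (fun y => / v y))
  | |- continuous (fun y => / @?u y) _ => apply (continuous_Rinv_comp u)
  | |- continuous (fun y => - @?u y) _ => apply (continuous_opp u)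
  | |- continuous (fun y => fst (@?g y)) _ => apply (continuous_Re_comp g)
  | |- continuous (fun y => snd (@?g y)) _ => apply (continuous_Im_comp g)
  | |- continuous (fun y => Cmod (@?g y) ^ 2) _ => apply (continuous_Cmod_sqr_comp g)
  | |- continuous (fun y => y) _ => apply continuous_id
  | |- continuous _ _ => assumption
  end.

Lemma ex_RInt_continuous_on (g : R -> R) a b :
  a <= b -> (forall x, a <= x <= b -> continuous g x) -> ex_RInt g a b.
Proof.
  intros Hab Hg. apply (@ex_RInt_continuous R_CompleteNormedModule).
  rewrite Rmin_left, Rmax_right by lra. exact Hg.
Qed.

Lemma is_RInt_derive_interior (F dF g : R -> R) a b :
  a <= b ->
  (forall x, a <= x <= b -> is_derive F x (dF x)) ->
  (forall x, a <= x <= b -> continuous dF x) ->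
  (forall x, a < x < b -> dF x = g x) ->
  is_RInt g a b (F b - F a).
Proof.
  intros Hab HF HdF Hg.
  apply (is_RInt_ext dF); [rewrite Rmin_left, Rmax_right by lra; exact Hg|].
  apply (@is_RInt_derive R_CompleteNormedModule); rewrite Rmin_left, Rmax_right by lra;
    assumption.
Qed.

Lemma RInt_gt_0_of_pos_point (g : R -> R) a b z0 :
  a < b -> (forall z, a <= z <= b -> continuous g z /\ 0 <= g z) ->
  a <= z0 <= b -> 0 < g z0 -> 0 < RInt g a b.
Proof.
  intros Hab Hg Hz0 Hgz0.
  assert (Hex : forall c d, a <= c <= d -> d <= b -> ex_RInt g c d).
  { intros c d Hcd Hd. apply ex_RInt_continuous_on; [lra|].
    intros z Hz; apply Hg; lra. }
  destruct (proj1 (Hg z0 Hz0) (ball (g z0) (pos_div_2 (mkposreal _ Hgz0))) (locally_ball _ _))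
    as [d Hd].
  pose proof (cond_pos d) as Hd0.
  set (c := Rmax a (z0 - d / 2)). set (e := Rmin b (z0 + d / 2)).
  assert (Hc : a <= c /\ z0 - d / 2 <= c /\ c <= z0) by
    (unfold c; split; [apply Rmax_l | split; [apply Rmax_r | apply Rmax_lub; lra]]).
  assert (He : e <= b /\ e <= z0 + d / 2 /\ z0 <= e) by
    (unfold e; split; [apply Rmin_l | split; [apply Rmin_r | apply Rmin_glb; lra]]).
  assert (Hce : c < e).
  { unfold c, e, Rmax, Rmin.
    destruct (Rle_dec a (z0 - d / 2)), (Rle_dec b (z0 + d / 2)); lra. }
  assert (Hnear : forall y, c <= y <= e -> g z0 / 2 < g y).
  { intros y Hy.
    assert (Hball : ball z0 d y) by (change (Rabs (y - z0) < d); apply Rabs_def1; lra).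
    specialize (Hd y Hball). change (Rabs (g y - g z0) < g z0 / 2) in Hd.
    apply Rabs_def2 in Hd. lra. }
  assert (Hmid : (e - c) * (g z0 / 2) <= RInt g c e).
  { rewrite <- (RInt_const (V := R_CompleteNormedModule)).
    apply RInt_le; [lra | apply ex_RInt_const | apply Hex; lra |].
    intros y Hy. apply Rlt_le, Hnear. lra. }
  assert (Hleft : 0 <= RInt g a c) by
    (apply RInt_ge_0; [lra | apply Hex; lra | intros; apply Hg; lra]).
  assert (Hright : 0 <= RInt g e b) by
    (apply RInt_ge_0; [lra | apply Hex; lra | intros; apply Hg; lra]).
  rewrite <- (RInt_Chasles g a c b), <- (RInt_Chasles g c e b) by (apply Hex; lra).
  assert (0 < (e - c) * (g z0 / 2)) by (apply Rmult_lt_0_compat; lra).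
  change (0 < RInt g a c + (RInt g c e + RInt g e b)). lra.
Qed.

Lemma le_sup_open (g : R -> R) a b x :
  a < b -> (forall z, a <= z <= b -> continuous g z) -> a < x < b ->
  g x <= sup_open g a b.
Proof.
  intros Hab Hg Hx.
  destruct (continuity_ab_maj g a b (Rlt_le _ _ Hab)) as [xmax [Hmax _]].
  { intros z Hz. apply continuity_pt_filterlim, Hg, Hz. }
  unfold sup_open.
  set (S := fun y => exists z, a < z < b /\ y = g z).
  destruct (Lub_Rbar_correct S) as [Hub Hlub].
  assert (Hge : Rbar_le (g x) (Lub_Rbar S)) by (apply Hub; exists x; auto).
  assert (Hle : Rbar_le (Lub_Rbar S) (g xmax)).
  { apply Hlub. intros y [z [Hz ->]]. apply Hmax. lra. }
  destruct (Lub_Rbar S); simpl in *; tauto.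
Qed.

Lemma ex_RInt_weighted_Cmod_sqr (g : R -> R) (h : R -> C) a b :
  a <= b -> (forall x, a <= x <= b -> continuous g x /\ continuous h x) ->
  ex_RInt (fun x => g x * Cmod (h x) ^ 2) a b.
Proof.
  intros Hab Hgh. apply ex_RInt_continuous_on; [exact Hab|].
  intros x Hx. destruct (Hgh x Hx). solve_continuous.
Qed.

Lemma eigenvalue_real_of_rayleigh (sigma : C) (K L : R) :
  sigma <> RtoC 0 -> K <> 0 -> RtoC K = (/ sigma * RtoC L)%C ->
  Im sigma = 0 /\ Re sigma * K = L.
Proof.
  intros Hsig HK HKL.
  assert (H : (sigma * RtoC K)%C = RtoC L) by (rewrite HKL; field; exact Hsig).
  destruct sigma as [sr si]. injection H as Hre Him. simpl.
  split; [|lra].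
  apply (Rmult_eq_reg_r K); [lra | exact HK].
Qed.

Lemma rayleigh_quotient_lt (s K L X M : R) :
  0 < s -> s * K = L -> 0 <= X < K -> L <= M * X -> s < M.
Proof.
  intros Hs HsK [HX HXK] HL.
  destruct (Rlt_le_dec s M) as [|HMs]; [assumption|].
  assert (s * X < s * K) by (apply Rmult_lt_compat_l; lra).
  assert (M * X <= s * X) by (apply Rmult_le_compat_r; lra).
  lra.
Qed.

Section SturmLiouville.

Variables (a b : R) (p dp q w : R -> R) (f f' f'' : R -> C).
Hypothesis Hab : a < b.
Hypothesis Hp : forall x, a <= x <= b -> is_derive p x (dp x).
Hypothesis Hdp : forall x, a <= x <= b -> continuous dp x.
Hypothesis Hq : forall x, a <= x <= b -> continuous q x.
Hypothesis Hw : forall x, a <= x <= b -> continuous w x.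
Hypothesis Hf : forall x, a <= x <= b -> is_derive_C f x (f' x).
Hypothesis Hf' : forall x, a <= x <= b -> is_derive_C f' x (f'' x).
Hypothesis Hf'' : forall x, a <= x <= b -> continuous f'' x.

Let bform x := (RtoC (p x) * f' x * Cconj (f x))%C.
Let bform' x := ((RtoC (dp x) * f' x + RtoC (p x) * f'' x) * Cconj (f x)
             + RtoC (p x) * f' x * Cconj (f' x))%C.
Let Ip := RInt (fun x => p x * Cmod (f' x) ^ 2) a b.
Let Iq := RInt (fun x => q x * Cmod (f x) ^ 2) a b.
Let Iw := RInt (fun x => w x * Cmod (f x) ^ 2) a b.

Lemma continuous_p_f_f' x :
  a <= x <= b -> continuous p x /\ continuous f x /\ continuous f' x.
Proof.
  intros Hx. repeat split.
  - apply (ex_derive_continuous (V := R_NormedModule)). exists (dp x). auto.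
  - eapply is_derive_C_continuous; auto.
  - eapply is_derive_C_continuous; auto.
Qed.

Lemma is_derive_boundary_form x : a <= x <= b -> is_derive_C bform x (bform' x).
Proof.
  intros Hx. apply is_derive_C_mult_conj; auto.
  apply is_derive_C_RtoC_mult; auto.
Qed.

Lemma continuous_boundary_form_derivative x : a <= x <= b ->
  continuous (fun y => Re (bform' y)) x /\ continuous (fun y => Im (bform' y)) x.
Proof.
  intros Hx. destruct (continuous_p_f_f' x Hx) as (Hpc & Hfc & Hf'c).
  pose proof (Hdp x Hx). pose proof (Hf'' x Hx).
  unfold bform', Re, Im; simpl. split; solve_continuous.
Qed.

Definition rayleigh_num (alpha_a alpha_b : R) : R :=
  alpha_a * Cmod (f a) ^ 2 + alpha_b * Cmod (f b) ^ 2 + Ip + Iq.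

Definition rayleigh_den (beta_a beta_b : R) : R :=
  beta_a * Cmod (f a) ^ 2 + beta_b * Cmod (f b) ^ 2 + Iw.

Lemma rayleigh_num_gt (rho : R -> R) (alpha_a alpha_b : R) :
  0 <= alpha_a -> 0 <= alpha_b -> (forall x, a < x < b -> 0 <= p x) ->
  (forall x, a <= x <= b -> continuous rho x /\ rho x < q x) ->
  (exists x0, a <= x0 <= b /\ f x0 <> RtoC 0) ->
  alpha_a * Cmod (f a) ^ 2 + alpha_b * Cmod (f b) ^ 2
    + RInt (fun x => rho x * Cmod (f x) ^ 2) a b < rayleigh_num alpha_a alpha_b.
Proof.
  intros Ha Hb Hp0 Hrho [x0 [Hx0 Hfx0]].
  assert (HIrho : ex_RInt (fun x => rho x * Cmod (f x) ^ 2) a b).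
  { apply ex_RInt_weighted_Cmod_sqr; [lra|].
    intros x Hx. split; [apply Hrho, Hx | apply (continuous_p_f_f' x Hx)]. }
  assert (HIq : ex_RInt (fun x => q x * Cmod (f x) ^ 2) a b).
  { apply ex_RInt_weighted_Cmod_sqr; [lra|].
    intros x Hx. split; [apply Hq, Hx | apply (continuous_p_f_f' x Hx)]. }
  assert (HIp : 0 <= Ip).
  { apply RInt_ge_0; [lra | |].
    - apply ex_RInt_weighted_Cmod_sqr; [lra|].
      intros x Hx. split; apply (continuous_p_f_f' x Hx).
    - intros x Hx. apply Rmult_le_pos; [apply Hp0, Hx | apply pow2_ge_0]. }
  assert (Hgap : 0 < RInt (fun x => (q x - rho x) * Cmod (f x) ^ 2) a b).
  { apply (RInt_gt_0_of_pos_point _ a b x0); [lra | | exact Hx0 |].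
    - intros x Hx. destruct (Hrho x Hx) as [Hc Hlt].
      destruct (continuous_p_f_f' x Hx) as (_ & Hfc & _). pose proof (Hq x Hx).
      split; [solve_continuous | apply Rmult_le_pos; [lra | apply pow2_ge_0]].
    - apply Rmult_lt_0_compat; [apply Rlt_0_minus, Hrho, Hx0|].
      apply pow_lt, Cmod_gt_0, Hfx0. }
  assert (Hsplit : RInt (fun x => (q x - rho x) * Cmod (f x) ^ 2) a b
                   = Iq - RInt (fun x => rho x * Cmod (f x) ^ 2) a b).
  { apply is_RInt_unique.
    apply (is_RInt_ext (fun x => q x * Cmod (f x) ^ 2 - rho x * Cmod (f x) ^ 2));
      [intros x _; symmetry; apply Rmult_minus_distr_r|].
    exact (is_RInt_minus _ _ a b _ _ (RInt_correct _ a b HIq) (RInt_correct _ a b HIrho)). }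
  unfold rayleigh_num. lra.
Qed.

Lemma rayleigh_den_le (rho : R -> R) (M alpha_a alpha_b beta_a beta_b : R) :
  beta_a <= M * alpha_a -> beta_b <= M * alpha_b ->
  (forall x, a <= x <= b -> continuous rho x) ->
  (forall x, a < x < b -> w x <= M * rho x) ->
  rayleigh_den beta_a beta_b
  <= M * (alpha_a * Cmod (f a) ^ 2 + alpha_b * Cmod (f b) ^ 2
          + RInt (fun x => rho x * Cmod (f x) ^ 2) a b).
Proof.
  intros Ha Hb Hrho Hw_le.
  assert (HIrho : ex_RInt (fun x => rho x * Cmod (f x) ^ 2) a b).
  { apply ex_RInt_weighted_Cmod_sqr; [lra|].
    intros x Hx. split; [apply Hrho, Hx | apply (continuous_p_f_f' x Hx)]. }
  assert (HIw : Iw <= M * RInt (fun x => rho x * Cmod (f x) ^ 2) a b).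
  { rewrite <- (RInt_scal (V := R_CompleteNormedModule)) by exact HIrho.
    apply RInt_le; [lra | | |].
    - apply ex_RInt_weighted_Cmod_sqr; [lra|].
      intros x Hx. split; [apply Hw, Hx | apply (continuous_p_f_f' x Hx)].
    - apply (ex_RInt_scal (V := R_CompleteNormedModule)), HIrho.
    - intros x Hx. change (scal M (rho x * Cmod (f x) ^ 2)) with (M * (rho x * Cmod (f x) ^ 2)).
      rewrite <- Rmult_assoc. apply Rmult_le_compat_r; [apply pow2_ge_0 | apply Hw_le, Hx]. }
  assert (Hfa := pow2_ge_0 (Cmod (f a))). assert (Hfb := pow2_ge_0 (Cmod (f b))).
  unfold rayleigh_den.
  assert (beta_a * Cmod (f a) ^ 2 <= M * alpha_a * Cmod (f a) ^ 2)
    by (apply Rmult_le_compat_r; lra).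
  assert (beta_b * Cmod (f b) ^ 2 <= M * alpha_b * Cmod (f b) ^ 2)
    by (apply Rmult_le_compat_r; lra).
  nra.
Qed.

Section Eigenfunction.

Variable lam : C.
Hypothesis Hode : forall x, a < x < b ->
  is_derive_C (fun y => RtoC (p y) * f' y)%C x ((RtoC (q x) - lam * RtoC (w x)) * f x)%C.

Lemma boundary_form_derivative_interior x : a < x < b ->
  bform' x = (RtoC (p x * Cmod (f' x) ^ 2 + q x * Cmod (f x) ^ 2)%R
          - lam * RtoC (w x * Cmod (f x) ^ 2)%R)%C.
Proof.
  intros Hx.
  assert (Hflux : (RtoC (dp x) * f' x + RtoC (p x) * f'' x)%C
                  = ((RtoC (q x) - lam * RtoC (w x)) * f x)%C).
  { apply (is_derive_C_unique (fun y => RtoC (p y) * f' y)%C x); [|apply Hode, Hx].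
    apply is_derive_C_RtoC_mult; [apply Hp | apply Hf']; lra. }
  unfold bform'. rewrite Hflux, !RtoC_plus, !RtoC_mult, !Cmod2_conj. ring.
Qed.

Lemma green_identity : (bform b - bform a)%C = (RtoC (Ip + Iq) - lam * RtoC Iw)%C.
Proof.
  assert (Hex : forall g : R -> R, (forall x, a <= x <= b -> continuous g x) ->
             ex_RInt (fun x => g x * Cmod (f x) ^ 2) a b).
  { intros g Hg. apply ex_RInt_weighted_Cmod_sqr; [lra|].
    intros x Hx. split; [auto | apply (continuous_p_f_f' x Hx)]. }
  pose proof (Hex q Hq) as HIq. pose proof (Hex w Hw) as HIw.
  assert (HIp : ex_RInt (fun x => p x * Cmod (f' x) ^ 2) a b).
  { apply ex_RInt_weighted_Cmod_sqr; [lra|].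
    intros x Hx. split; apply (continuous_p_f_f' x Hx). }
  assert (ERe : Re (bform b) - Re (bform a) = Ip + Iq - Re lam * Iw).
  { transitivity (RInt (fun x => p x * Cmod (f' x) ^ 2 + q x * Cmod (f x) ^ 2
                                 - Re lam * (w x * Cmod (f x) ^ 2)) a b).
    - symmetry. apply is_RInt_unique.
      apply (is_RInt_derive_interior (fun y => Re (bform y)) (fun y => Re (bform' y)));
        [lra | | |].
      + intros x Hx. apply is_derive_C_Re, is_derive_boundary_form, Hx.
      + intros x Hx. apply (proj1 (continuous_boundary_form_derivative x Hx)).
      + intros x Hx. rewrite boundary_form_derivative_interior by exact Hx.
        unfold Re; simpl; ring.
    - apply is_RInt_unique.
      exact (is_RInt_minus _ _ a b _ _
               (is_RInt_plus _ _ a b _ _ (RInt_correct _ a b HIp) (RInt_correct _ a b HIq))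
               (is_RInt_scal _ a b (Re lam) _ (RInt_correct _ a b HIw))). }
  assert (EIm : Im (bform b) - Im (bform a) = - (Im lam * Iw)).
  { transitivity (RInt (fun x => - (Im lam * (w x * Cmod (f x) ^ 2))) a b).
    - symmetry. apply is_RInt_unique.
      apply (is_RInt_derive_interior (fun y => Im (bform y)) (fun y => Im (bform' y)));
        [lra | | |].
      + intros x Hx. apply is_derive_C_Im, is_derive_boundary_form, Hx.
      + intros x Hx. apply (proj2 (continuous_boundary_form_derivative x Hx)).
      + intros x Hx. rewrite boundary_form_derivative_interior by exact Hx.
        unfold Im; simpl; ring.
    - apply is_RInt_unique.
      exact (is_RInt_opp _ a b _ (is_RInt_scal _ a b (Im lam) _ (RInt_correct _ a b HIw))). }
  apply injective_projections; simpl.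
  - unfold Re in ERe. simpl in ERe. lra.
  - unfold Im in EIm. simpl in EIm. lra.
Qed.

Lemma rayleigh_identity (alpha_a beta_a alpha_b beta_b : R) :
  (RtoC (p a) * f' a = (RtoC alpha_a - lam * RtoC beta_a) * f a)%C ->
  (RtoC (- p b) * f' b = (RtoC alpha_b - lam * RtoC beta_b) * f b)%C ->
  RtoC (rayleigh_num alpha_a alpha_b) = (lam * RtoC (rayleigh_den beta_a beta_b))%C.
Proof.
  intros Ha Hb.
  pose proof green_identity as G. unfold bform in G.
  replace (RtoC (p b) * f' b)%C with (- (RtoC (- p b) * f' b))%C in G
    by (rewrite RtoC_opp; ring).
  rewrite Ha, Hb in G.
  unfold rayleigh_num, rayleigh_den.
  rewrite !RtoC_plus, !RtoC_mult, !Cmod2_conj. rewrite RtoC_plus in G.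
  match goal with |- ?X = ?Y => match type of G with ?l = ?r =>
    transitivity (Y - (l - r))%C; [ring | rewrite G; ring] end end.
Qed.

End Eigenfunction.

Theorem robin_eigenvalue_real_bound (sigma : C) (rho : R -> R)
    (alpha_a beta_a alpha_b beta_b : R) :
  sigma <> RtoC 0 ->
  (forall x, a < x < b ->
     is_derive_C (fun y => RtoC (p y) * f' y)%C x
                 ((RtoC (q x) - / sigma * RtoC (w x)) * f x)%C) ->
  (RtoC (p a) * f' a = (RtoC alpha_a - / sigma * RtoC beta_a) * f a)%C ->
  (RtoC (- p b) * f' b = (RtoC alpha_b - / sigma * RtoC beta_b) * f b)%C ->
  0 <= alpha_a -> 0 <= alpha_b -> (forall x, a < x < b -> 0 <= p x) ->
  (forall x, a <= x <= b -> continuous rho x /\ 0 <= rho x < q x) ->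
  (exists x0, a <= x0 <= b /\ f x0 <> RtoC 0) ->
  Im sigma = 0 /\
  forall M, beta_a <= M * alpha_a -> beta_b <= M * alpha_b ->
    (forall x, a < x < b -> w x <= M * rho x) -> 0 < Re sigma -> Re sigma < M.
Proof.
  intros Hsig Hode Hbc_a Hbc_b Ha Hb Hp0 Hrho Hfnz.
  pose proof (rayleigh_identity _ Hode _ _ _ _ Hbc_a Hbc_b) as HKL.
  set (X := alpha_a * Cmod (f a) ^ 2 + alpha_b * Cmod (f b) ^ 2
            + RInt (fun x => rho x * Cmod (f x) ^ 2) a b).
  assert (HXK : X < rayleigh_num alpha_a alpha_b).
  { apply rayleigh_num_gt; auto.
    intros x Hx. destruct (Hrho x Hx) as (? & ? & ?). split; assumption. }
  assert (HX0 : 0 <= X).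
  { assert (0 <= RInt (fun x => rho x * Cmod (f x) ^ 2) a b).
    { apply RInt_ge_0; [lra | |].
      - apply ex_RInt_weighted_Cmod_sqr; [lra|]. intros x Hx.
        split; [apply Hrho, Hx | apply (continuous_p_f_f' x Hx)].
      - intros x Hx. apply Rmult_le_pos; [apply Hrho; lra | apply pow2_ge_0]. }
    pose proof (pow2_ge_0 (Cmod (f a))). pose proof (pow2_ge_0 (Cmod (f b))).
    assert (0 <= alpha_a * Cmod (f a) ^ 2) by (apply Rmult_le_pos; lra).
    assert (0 <= alpha_b * Cmod (f b) ^ 2) by (apply Rmult_le_pos; lra).
    unfold X. lra. }
  assert (HK : rayleigh_num alpha_a alpha_b <> 0) by lra.
  destruct (eigenvalue_real_of_rayleigh sigma _ _ Hsig HK HKL) as [Him Hre].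
  split; [exact Him|].
  intros M Hba Hbb Hw_le Hpos.
  apply (rayleigh_quotient_lt (Re sigma) _ _ X M Hpos Hre (conj HX0 HXK)).
  apply rayleigh_den_le; auto. intros x Hx. apply Hrho, Hx.
Qed.

End SturmLiouville.

Lemma cubic_le_Rpower_3_2 (x y : R) :
  0 <= x -> 0 < y -> 3 * y * x - x ^ 3 <= 2 * Rpower y (3 / 2).
Proof.
  intros Hx Hy.
  replace (3 / 2) with (1 + / 2) by field.
  rewrite Rpower_plus, Rpower_1, Rpower_sqrt by exact Hy.
  pose proof (sqrt_pos y) as Hr. pose proof (sqrt_sqrt y (Rlt_le _ _ Hy)) as Hyr.
  set (r := sqrt y) in *. rewrite <- Hyr.
  assert (0 <= (x - r) ^ 2 * (x + 2 * r)) by (apply Rmult_le_pos; [apply pow2_ge_0 | lra]).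
  assert (2 * (r * r * r) - (3 * (r * r) * x - x ^ 3) = (x - r) ^ 2 * (x + 2 * r)) by ring.
  lra.
Qed.

Lemma interface_rate_le (T Rj d m Q nn : R) :
  0 < T -> 0 < Rj -> 0 < d -> 0 < m -> 0 < Q -> 0 <= nn ->
  Q * nn / (2 * PI * Rj ^ 2) * (d / m) - T / m * ((nn ^ 3 - nn) / Rj ^ 3)
  <= 2 * T / (m * Rj ^ 3) * Rpower (Q * Rj / (6 * PI * T) * d + 1 / 3) (3 / 2).
Proof.
  intros HT HRj Hd Hm HQ Hnn.
  pose proof PI_RGT_0 as HPI.
  set (y := Q * Rj / (6 * PI * T) * d + 1 / 3).
  assert (Hy : 0 < y).
  { assert (0 < Q * Rj / (6 * PI * T) * d) by
      (apply Rmult_lt_0_compat; [apply Rdiv_lt_0_compat; nra | exact Hd]).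
    unfold y; lra. }
  assert (HRj3 : 0 < Rj ^ 3) by (apply pow_lt, HRj).
  replace (Q * nn / (2 * PI * Rj ^ 2) * (d / m) - T / m * ((nn ^ 3 - nn) / Rj ^ 3))
    with (T / (m * Rj ^ 3) * (3 * y * nn - nn ^ 3)) by (unfold y; field; lra).
  replace (2 * T / (m * Rj ^ 3) * Rpower y (3 / 2))
    with (T / (m * Rj ^ 3) * (2 * Rpower y (3 / 2))) by (field; lra).
  apply Rmult_le_compat_l; [apply Rlt_le, Rdiv_lt_0_compat; nra|].
  apply cubic_le_Rpower_3_2; assumption.
Qed.

Lemma R0sq_ge_0 (Q tau : R) : 0 <= Q -> 0 <= tau -> 0 <= R0sq Q tau.
Proof.
  intros HQ Htau. unfold R0sq.
  apply Rmult_le_pos; [nra | apply Rlt_le, Rinv_0_lt_compat, PI_RGT_0].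
Qed.

Lemma Rt_sqr (Q Rj0 tau : R) :
  0 <= Q -> 0 <= tau -> Rt Q Rj0 tau ^ 2 = Rj0 ^ 2 + R0sq Q tau.
Proof.
  intros HQ Htau. pose proof (R0sq_ge_0 Q tau HQ Htau). unfold Rt, R0sq in *.
  rewrite pow2_sqrt by nra. ring.
Qed.

Lemma Rt_pos (Q Rj0 tau : R) : 0 <= Q -> 0 <= tau -> 0 < Rj0 -> 0 < Rt Q Rj0 tau.
Proof.
  intros HQ Htau HRj0. pose proof (R0sq_ge_0 Q tau HQ Htau). unfold Rt, R0sq in *.
  apply sqrt_lt_R0. nra.
Qed.

Lemma three_layer_geometry (Q R10 R20 tau : R) :
  0 <= Q -> 0 <= tau -> 0 < R10 < R20 ->
  0 < R10 ^ 2 / R20 ^ 2 < 1 /\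
  Rt Q R10 tau ^ 2 = R10 ^ 2 / R20 ^ 2 * R20 ^ 2 + R0sq Q tau /\
  Rt Q R20 tau ^ 2 = 1 * R20 ^ 2 + R0sq Q tau.
Proof.
  intros HQ Htau HR.
  assert (H12 : 0 < R10 ^ 2 < R20 ^ 2) by (simpl; nra).
  assert (Hz1 : R10 ^ 2 / R20 ^ 2 * R20 ^ 2 = R10 ^ 2) by (field; lra).
  rewrite !Rt_sqr by assumption.
  split; [split; [apply Rdiv_lt_0_compat | nra]; lra | split; [rewrite Hz1 | ]; ring].
Qed.

Lemma robin_condition_scale (c d k alpha beta : R) (sigma g g' : C) :
  d = k * c -> (RtoC c * g' = (RtoC alpha - RtoC beta / sigma) * g)%C ->
  (RtoC d * g' = (RtoC (k * alpha) - / sigma * RtoC (k * beta)) * g)%C.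
Proof.
  intros -> H. rewrite RtoC_mult, <- Cmult_assoc, H, !RtoC_mult. unfold Cdiv. ring.
Qed.

Section HeleShawCoefficients.

Variables (Q R20 R0 mui z1 : R) (n : nat) (mu mu' : R -> R).
Hypothesis HQ : 0 < Q.
Hypothesis HR20 : 0 < R20.
Hypothesis HR0 : 0 <= R0.
Hypothesis Hmui : 0 < mui.
Hypothesis Hn : 0 < INR n.
Hypothesis Hz1 : 0 < z1.
Hypothesis Hmu_d : forall x, z1 <= x <= 1 -> is_derive mu x (mu' x).
Hypothesis Hmu_c : forall x, z1 <= x <= 1 -> continuous mu' x.
Hypothesis Hmu_b : forall x, z1 <= x <= 1 -> mui < mu x.

(* [hs_r2 x] is r^2 = x R_2^2(0) + R_0^2(tau), and the eigenvalue equation reads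
   (hs_p f')' = (hs_q - hs_w / sigma) f. *)
Definition hs_r2 (x : R) : R := x * R20 ^ 2 + R0.
Definition hs_p (x : R) : R := hs_r2 x * mu x.
Definition hs_dp (x : R) : R := R20 ^ 2 * mu x + hs_r2 x * mu' x.
Definition hs_A (x : R) : R := INR n ^ 2 * R20 ^ 4 / (4 * hs_r2 x).
Definition hs_q (x : R) : R := hs_A x * mu x.
Definition hs_w (x : R) : R := Q * INR n ^ 2 * R20 ^ 2 / (4 * PI * hs_r2 x) * mu' x.

Lemma hs_r2_pos x : z1 <= x -> 0 < hs_r2 x.
Proof.
  intros Hx. assert (0 < R20 ^ 2) by (apply pow_lt, HR20). unfold hs_r2. nra.
Qed.

Lemma continuous_mu x : z1 <= x <= 1 -> continuous mu x.
Proof.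
  intros Hx. apply (ex_derive_continuous (V := R_NormedModule)). eexists; apply Hmu_d, Hx.
Qed.

Lemma is_derive_hs_p x : z1 <= x <= 1 -> is_derive hs_p x (hs_dp x).
Proof.
  intros Hx. apply (is_derive_Rmult hs_r2); [|apply Hmu_d, Hx].
  unfold hs_r2. auto_derive; [exact I | ring].
Qed.

Lemma continuous_hs_dp x : z1 <= x <= 1 -> continuous hs_dp x.
Proof.
  intros Hx. pose proof (Hmu_c x Hx). pose proof (continuous_mu x Hx).
  unfold hs_dp, hs_r2. solve_continuous.
Qed.

Lemma continuous_hs_A x : z1 <= x <= 1 -> continuous hs_A x.
Proof.
  intros Hx. pose proof (hs_r2_pos x (proj1 Hx)).
  unfold hs_A, hs_r2 in *. solve_continuous. lra.
Qed.

Lemma continuous_hs_q x : z1 <= x <= 1 -> continuous hs_q x.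
Proof.
  intros Hx. pose proof (continuous_hs_A x Hx). pose proof (continuous_mu x Hx).
  unfold hs_q. solve_continuous.
Qed.

Lemma continuous_hs_w x : z1 <= x <= 1 -> continuous hs_w x.
Proof.
  intros Hx. pose proof (Hmu_c x Hx). pose proof (hs_r2_pos x (proj1 Hx)).
  pose proof PI_RGT_0. unfold hs_w, hs_r2 in *. solve_continuous. nra.
Qed.

Lemma hs_A_pos x : z1 <= x -> 0 < hs_A x.
Proof.
  intros Hx. pose proof (hs_r2_pos x Hx). unfold hs_A.
  apply Rdiv_lt_0_compat; [apply Rmult_lt_0_compat; apply pow_lt|]; lra.
Qed.

Lemma hs_p_ge_0 x : z1 < x < 1 -> 0 <= hs_p x.
Proof.
  intros Hx. pose proof (hs_r2_pos x ltac:(lra)). pose proof (Hmu_b x ltac:(lra)).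
  unfold hs_p. nra.
Qed.

Lemma hs_q_gt x : z1 <= x <= 1 ->
  continuous (fun y => mui * hs_A y) x /\ 0 <= mui * hs_A x < hs_q x.
Proof.
  intros Hx. pose proof (continuous_hs_A x Hx). pose proof (hs_A_pos x (proj1 Hx)).
  pose proof (Hmu_b x Hx). unfold hs_q. split; [solve_continuous | nra].
Qed.

Lemma hs_w_le x : z1 < x < 1 ->
  hs_w x <= Q / (PI * R20 ^ 2) * (1 / mui) * sup_open mu' z1 1 * (mui * hs_A x).
Proof.
  intros Hx. pose proof PI_RGT_0.
  pose proof (hs_A_pos x ltac:(lra)). pose proof (hs_r2_pos x ltac:(lra)).
  assert (Hc : 0 < Q / (PI * R20 ^ 2) * hs_A x)
    by (apply Rmult_lt_0_compat; [apply Rdiv_lt_0_compat; [lra|] | lra];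
        apply Rmult_lt_0_compat; [lra | apply pow_lt; lra]).
  replace (hs_w x) with (Q / (PI * R20 ^ 2) * hs_A x * mu' x)
    by (unfold hs_w, hs_A; field; repeat split; lra).
  replace (Q / (PI * R20 ^ 2) * (1 / mui) * sup_open mu' z1 1 * (mui * hs_A x))
    with (Q / (PI * R20 ^ 2) * hs_A x * sup_open mu' z1 1) by (field; lra).
  apply Rmult_le_compat_l; [lra|].
  apply le_sup_open; [lra | | exact Hx]. intros z Hz. apply Hmu_c, Hz.
Qed.

Lemma hs_sturm_liouville (sigma : C) (f f' : R -> C) z :
  is_derive_C (fun x => RtoC ((x * R20 ^ 2 + R0) * mu x) * f' x)%C z
    (RtoC (INR n ^ 2 * R20 ^ 4 / (4 * (z * R20 ^ 2 + R0)) * mu z) * f z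
     + RtoC (- (Q * INR n ^ 2 * R20 ^ 2 / (4 * PI * (z * R20 ^ 2 + R0)))) * / sigma
       * (RtoC (mu' z) * f z))%C ->
  is_derive_C (fun y => RtoC (hs_p y) * f' y)%C z
    ((RtoC (hs_q z) - / sigma * RtoC (hs_w z)) * f z)%C.
Proof.
  intros H.
  replace ((RtoC (hs_q z) - / sigma * RtoC (hs_w z)) * f z)%C with
    (RtoC (INR n ^ 2 * R20 ^ 4 / (4 * (z * R20 ^ 2 + R0)) * mu z) * f z
     + RtoC (- (Q * INR n ^ 2 * R20 ^ 2 / (4 * PI * (z * R20 ^ 2 + R0)))) * / sigma
       * (RtoC (mu' z) * f z))%C; [exact H|].
  unfold hs_q, hs_w, hs_A, hs_r2. rewrite RtoC_opp, (RtoC_mult _ (mu' z)). ring.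
Qed.

End HeleShawCoefficients.

Theorem mainTheorem2
  (Q T1 T2 mui muo R10 R20 tau : R) (n : nat)
  (mu mu' : R -> R) (sigma : C) (f f' f'' : R -> C)
  (HQ : 0 < Q) (HT1 : 0 < T1) (HT2 : 0 < T2)
  (Hmui : 0 < mui) (Hmuio : mui < muo)
  (HR10 : 0 < R10) (HR12 : R10 < R20)
  (Hn : (1 <= n)%nat) (Htau : 0 <= tau)
  (* mu in C^1([zeta1,1]) *)
  (Hmu_d : forall z, R10 ^ 2 / R20 ^ 2 <= z <= 1 -> is_derive mu z (mu' z))
  (Hmu_c : forall z, R10 ^ 2 / R20 ^ 2 <= z <= 1 -> continuous mu' z)
  (Hmu_b : forall z, R10 ^ 2 / R20 ^ 2 <= z <= 1 -> mui < mu z < muo)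
  (* f is C^2 on [zeta1,1] *)
  (Hf1 : forall z, R10 ^ 2 / R20 ^ 2 <= z <= 1 -> is_derive_C f z (f' z))
  (Hf2 : forall z, R10 ^ 2 / R20 ^ 2 <= z <= 1 -> is_derive_C f' z (f'' z))
  (Hf2c : forall z, R10 ^ 2 / R20 ^ 2 <= z <= 1 -> continuous f'' z)
  (* nontrivial eigenfunction, nonzero eigenvalue *)
  (Hfnz : exists z, R10 ^ 2 / R20 ^ 2 <= z <= 1 /\ f z <> RtoC 0)
  (Hsig : sigma <> RtoC 0)
  (* the differential equation on (zeta1, 1) *)
  (Hode : forall z, R10 ^ 2 / R20 ^ 2 < z < 1 ->
     is_derive_C
       (fun x => Cmult (RtoC ((x * R20 ^ 2 + R0sq Q tau) * mu x)) (f' x)) z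
       (Cplus
          (Cmult (RtoC (INR n ^ 2 * R20 ^ 4 / (4 * (z * R20 ^ 2 + R0sq Q tau)) * mu z))
                 (f z))
          (Cmult
             (Cmult (RtoC (- (Q * INR n ^ 2 * R20 ^ 2 /
                              (4 * PI * (z * R20 ^ 2 + R0sq Q tau)))))
                    (Cinv sigma))
             (Cmult (RtoC (mu' z)) (f z)))))
  (* boundary conditions *)
  (Hbc1 :
     Cmult (RtoC (2 * Rt Q R10 tau ^ 2 / (INR n * R20 ^ 2) * mu (R10 ^ 2 / R20 ^ 2)))
           (f' (R10 ^ 2 / R20 ^ 2))
     = Cmult (Cminus (RtoC mui)
                     (Cdiv (RtoC (F1 Q T1 mui (Rt Q R10 tau) mu (R10 ^ 2 / R20 ^ 2) n))
                           sigma))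
             (f (R10 ^ 2 / R20 ^ 2)))
  (Hbc2 :
     Cmult (RtoC (- (2 * Rt Q R20 tau ^ 2 / (INR n * R20 ^ 2)) * mu 1)) (f' 1)
     = Cmult (Cminus (RtoC muo)
                     (Cdiv (RtoC (F2 Q T2 muo (Rt Q R20 tau) mu n)) sigma))
             (f 1)) :
  Im sigma = 0 /\
  (0 < Re sigma ->
     Re sigma <
       Rmax (Rmax
         (Q * INR n / (2 * PI * Rt Q R10 tau ^ 2) * ((mu (R10 ^ 2 / R20 ^ 2) - mui) / mui)
          - T1 / mui * ((INR n ^ 3 - INR n) / Rt Q R10 tau ^ 3))
         (Q * INR n / (2 * PI * Rt Q R20 tau ^ 2) * ((muo - mu 1) / muo)
          - T2 / muo * ((INR n ^ 3 - INR n) / Rt Q R20 tau ^ 3)))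
         (Q / (PI * R20 ^ 2) * (1 / mui) * sup_open mu' (R10 ^ 2 / R20 ^ 2) 1)
   /\
     Re sigma <
       Rmax (Rmax
         (2 * T1 / (mui * Rt Q R10 tau ^ 3) *
          Rpower (Q * Rt Q R10 tau / (6 * PI * T1) * (mu (R10 ^ 2 / R20 ^ 2) - mui) + 1 / 3)
                 (3 / 2))
         (2 * T2 / (muo * Rt Q R20 tau ^ 3) *
          Rpower (Q * Rt Q R20 tau / (6 * PI * T2) * (muo - mu 1) + 1 / 3) (3 / 2)))
         (Q / (PI * R20 ^ 2) * (1 / mui) * sup_open mu' (R10 ^ 2 / R20 ^ 2) 1)).
Proof.
  pose proof PI_RGT_0 as HPI.
  destruct (three_layer_geometry Q R10 R20 tau ltac:(lra) Htau ltac:(lra)) as (Hz1 & HR1 & HR2).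
  assert (HRt1 : 0 < Rt Q R10 tau) by (apply Rt_pos; lra).
  assert (HRt2 : 0 < Rt Q R20 tau) by (apply Rt_pos; lra).
  assert (HR0 : 0 <= R0sq Q tau) by (apply R0sq_ge_0; lra).
  set (z1 := R10 ^ 2 / R20 ^ 2) in *.
  set (R0 := R0sq Q tau) in *.
  clearbody R0.
  set (k := INR n * R20 ^ 2 / 2).
  assert (Hn0 : 0 < INR n) by exact (lt_0_INR n Hn).
  assert (Hk : 0 < k) by (unfold k; assert (0 < R20 ^ 2) by (apply pow_lt; lra); nra).
  set (F1v := F1 Q T1 mui (Rt Q R10 tau) mu z1 n) in *.
  set (F2v := F2 Q T2 muo (Rt Q R20 tau) mu n) in *.
  assert (HR20 : 0 < R20) by lra.
  assert (Hmu_lb : forall x, z1 <= x <= 1 -> mui < mu x) by (intros; apply Hmu_b; lra).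
  assert (Hbc_l : (RtoC (hs_p R20 R0 mu z1) * f' z1
                   = (RtoC (k * mui) - / sigma * RtoC (k * F1v)) * f z1)%C).
  { refine (robin_condition_scale _ _ k _ _ _ _ _ _ Hbc1).
    unfold hs_p, hs_r2, k. rewrite HR1. field. lra. }
  assert (Hbc_r : (RtoC (- hs_p R20 R0 mu 1) * f' 1
                   = (RtoC (k * muo) - / sigma * RtoC (k * F2v)) * f 1)%C).
  { refine (robin_condition_scale _ _ k _ _ _ _ _ _ Hbc2).
    unfold hs_p, hs_r2, k. rewrite HR2. field. lra. }
  destruct (robin_eigenvalue_real_bound z1 1 (hs_p R20 R0 mu) (hs_dp R20 R0 mu mu')
              (hs_q R20 R0 n mu) (hs_w Q R20 R0 n mu') f f' f'' ltac:(lra)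
              (is_derive_hs_p _ _ _ _ _ Hmu_d) (continuous_hs_dp _ _ _ _ _ Hmu_d Hmu_c)
              (continuous_hs_q _ _ _ _ _ _ HR20 HR0 (proj1 Hz1) Hmu_d)
              (continuous_hs_w _ _ _ _ _ _ HR20 HR0 (proj1 Hz1) Hmu_c)
              Hf1 Hf2 Hf2c sigma (fun x => mui * hs_A R20 R0 n x)
              (k * mui) (k * F1v) (k * muo) (k * F2v) Hsig
              (fun z Hz => hs_sturm_liouville _ _ _ _ _ _ _ _ _ z (Hode z Hz))
              Hbc_l Hbc_r ltac:(nra) ltac:(nra)
              (hs_p_ge_0 _ _ _ _ _ HR20 HR0 Hmui (proj1 Hz1) Hmu_lb)
              (hs_q_gt _ _ _ _ _ _ HR20 HR0 Hmui Hn0 (proj1 Hz1) Hmu_lb) Hfnz)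
    as [Him Hbound].
  split; [exact Him|]. intros Hpos.
  match goal with |- _ < Rmax (Rmax ?a1 ?a2) ?a3 /\ _ =>
    set (t1 := a1); set (t2 := a2); set (t3 := a3) end.
  assert (HM : t1 <= Rmax (Rmax t1 t2) t3 /\ t2 <= Rmax (Rmax t1 t2) t3
               /\ t3 <= Rmax (Rmax t1 t2) t3)
    by (repeat split; eauto using Rle_trans, Rmax_l, Rmax_r).
  assert (Hlt : Re sigma < Rmax (Rmax t1 t2) t3).
  { apply Hbound; [| | | exact Hpos].
    - replace (k * F1v) with (k * mui * t1)
        by (unfold F1v, F1, t1; field; repeat split; try apply pow_nonzero; lra).
      rewrite (Rmult_comm (Rmax _ _)). apply Rmult_le_compat_l; [nra | apply HM].
    - replace (k * F2v) with (k * muo * t2)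
        by (unfold F2v, F2, t2; field; repeat split; try apply pow_nonzero; lra).
      rewrite (Rmult_comm (Rmax _ _)). apply Rmult_le_compat_l; [nra | apply HM].
    - intros x Hx.
      apply (Rle_trans _ _ _ (hs_w_le _ _ _ _ _ _ _ HQ HR20 HR0 Hmui Hn0 (proj1 Hz1) Hmu_c x Hx)).
      pose proof (hs_A_pos _ _ _ _ HR20 HR0 Hn0 (proj1 Hz1) x ltac:(lra)).
      apply Rmult_le_compat_r; [nra | apply HM]. }
  split; [exact Hlt|].
  apply (Rlt_le_trans _ _ _ Hlt).
  apply Rmax_le_compat; [apply Rmax_le_compat | apply Rle_refl];
    apply interface_rate_le; try lra; try apply pos_INR.
  - apply Rlt_0_minus, Hmu_b. lra.
  - apply Rlt_0_minus, Hmu_b. lra.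
Qed.
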